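(* The functor $\mathcal{M}\colon\mathbb{O}\to\mathbf{Set}$ preserves pullbacks.
   Context: Fix a set $Act$ of action labels, an infinite set $\mathcal{E}$ of event names and a set $S$ of places. An $Act$-labelled poset is $O=(X_O,\preccurlyeq_O,l_O)$, $X_O\subseteq\mathcal{E}$, with partial order $\preccurlyeq_O$ and $l_O\colon X_O\to Act$; $|O|=\{(x,l_O(x))\}$. Morphisms preserve order and labels (acting on labelled events by $\sigma(x_a)=\sigma(x)_a$); order-embeddings additionally reflect order. $\mathbb{O}$ is the category whose objects are chosen representatives of the isomorphism classes of finite $Act$-labelled posets (abstract posets) and whose morphisms are order-embeddings. For $K\subseteq|O|$, $K$ is down-closed if $y\in K$, $x\preccurlyeq_O y$ imply $x\in K$, and $\downarrow_O K=\{y\in|O|:\exists x\in K,\ y\preccurlyeq_O x\}$. A causal marking is a finite set $c$ of pairs $K\vdash s$ with $s\in S$ and $K$ a finite subset of $\mathcal{E}\times Act$; $c\sigma=\{\sigma(K)\vdash s\}$ and $\downarrow_O c=\{\downarrow_O K\vdash s: K\vdash s\in c\}$. $O\rhd c$ is a P-marking if every cause set of $c$ is a down-closed subset of $|O|$. The presheaf of P-markings $\mathcal{M}\colon\mathbb{O}\to\mathbf{Set}$ is $\mathcal{M}(O)=\{c: O\rhd c\text{ is a P-marking}\}$ and, for $\sigma\colon O\to O'$, $\mathcal{M}(\sigma)(c)=\downarrow_{O'}(c\sigma)$. *)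

From HB Require Import structures.
From mathcomp Require Import all_boot.
From mathcomp Require Export finmap.
Set Implicit Arguments. Unset Strict Implicit. Unset Printing Implicit Defensive.

Local Open Scope fset_scope.

Section PMarkings.
(* E : event names, Act : action labels, S : places. *)
Variables (E Act S : choiceType).

(* A (finite) Act-labelled poset: a finite set of events X_O ⊆ E, an order
   relation and a labelling; only their values on X_O matter. *)
Record lposet := LPoset { ev : {fset E}; ple : rel E; lab : E -> Act }.

Definition is_lposet (O : lposet) : Prop :=
  (forall x, x \in ev O -> ple O x x) /\
  (forall x y, x \in ev O -> y \in ev O -> ple O x y -> ple O y x -> x = y) /\
  (forall x y z, x \in ev O -> y \in ev O -> z \in ev O ->
     ple O x y -> ple O y z -> ple O x z).

Definition levents (O : lposet) : {fset (E * Act)} :=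
  [fset (x, lab O x) | x in ev O].

Definition is_morphism (O O' : lposet) (s : E -> E) : Prop :=
  (forall x, x \in ev O -> s x \in ev O') /\
  (forall x, x \in ev O -> lab O' (s x) = lab O x) /\
  (forall x y, x \in ev O -> y \in ev O -> ple O x y -> ple O' (s x) (s y)).

Definition is_embedding (O O' : lposet) (s : E -> E) : Prop :=
  is_morphism O O' s /\
  (forall x y, x \in ev O -> y \in ev O -> ple O' (s x) (s y) -> ple O x y).

Definition is_iso (O O' : lposet) : Prop :=
  exists s t : E -> E, [/\ is_embedding O O' s, is_embedding O' O t,
    (forall x, x \in ev O -> t (s x) = x) &
    (forall y, y \in ev O' -> s (t y) = y)].

Definition same_lposet (O O' : lposet) : Prop :=
  [/\ ev O = ev O',
      (forall x y, x \in ev O -> y \in ev O -> ple O x y = ple O' x y) &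
      (forall x, x \in ev O -> lab O x = lab O' x)].

(* Chosen is a choice of representatives of the isomorphism classes of finite
   Act-labelled posets: the objects of the category 𝕆. *)
Definition skeleton (Chosen : lposet -> Prop) : Prop :=
  [/\ (forall O, Chosen O -> is_lposet O),
      (forall P, is_lposet P -> exists O, Chosen O /\ is_iso P O) &
      (forall O1 O2, Chosen O1 -> Chosen O2 -> is_iso O1 O2 -> same_lposet O1 O2)].

Definition is_pullback_O (Chosen : lposet -> Prop) (A B C P : lposet)
  (f g p1 p2 : E -> E) : Prop :=
  [/\ Chosen A /\ Chosen B /\ Chosen C /\ Chosen P,
      is_embedding A C f /\ is_embedding B C g /\
      is_embedding P A p1 /\ is_embedding P B p2,
      (forall x, x \in ev P -> f (p1 x) = g (p2 x)) &
      (forall (Q : lposet) (q1 q2 : E -> E), Chosen Q ->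
         is_embedding Q A q1 -> is_embedding Q B q2 ->
         (forall x, x \in ev Q -> f (q1 x) = g (q2 x)) ->
         exists u : E -> E,
           [/\ is_embedding Q P u,
               (forall x, x \in ev Q -> p1 (u x) = q1 x),
               (forall x, x \in ev Q -> p2 (u x) = q2 x) &
               (forall u' : E -> E, is_embedding Q P u' ->
                  (forall x, x \in ev Q -> p1 (u' x) = q1 x) ->
                  (forall x, x \in ev Q -> p2 (u' x) = q2 x) ->
                  forall x, x \in ev Q -> u' x = u x)])].

(* causal markings: finite sets of pairs K ⊢ s *)
Definition marking := {fset ({fset (E * Act)} * S)}.

Definition lev_map (s : E -> E) (K : {fset (E * Act)}) : {fset (E * Act)} :=
  [fset (s p.1, p.2) | p in K].

Definition mark_map (s : E -> E) (c : marking) : marking :=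
  [fset (lev_map s p.1, p.2) | p in c].

Definition down_set (O : lposet) (K : {fset (E * Act)}) : {fset (E * Act)} :=
  [fset y in levents O |
     has (fun x => (x \in levents O) && ple O y.1 x.1) (enum_fset K)].

Definition down_mark (O : lposet) (c : marking) : marking :=
  [fset (down_set O p.1, p.2) | p in c].

Definition down_closed (O : lposet) (K : {fset (E * Act)}) : Prop :=
  K `<=` levents O /\
  (forall y x, y \in K -> x \in levents O -> ple O x.1 y.1 -> x \in K).

Definition P_marking (O : lposet) (c : marking) : Prop :=
  forall p, p \in c -> down_closed O p.1.

(* The presheaf ℳ : 𝕆 -> Set: on objects ℳ(O) = {c | O ▷ c P-marking}
   (as a subset of the type of markings), on morphisms ℳ(σ)(c) = ↓_{O'}(cσ). *)
Definition Mobj (O : lposet) : marking -> Prop := P_marking O.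
Definition Mmap (O' : lposet) (s : E -> E) (c : marking) : marking :=
  down_mark O' (mark_map s c).

(* The square of sets/functions
        mp2
    XP ----> XB
 mp1 |        | mg
     v        v
    XA ----> XC
        mf
   is a pullback in Set (functions considered on the given subsets). *)
Definition set_pullback (XA XB XP : marking -> Prop)
  (mf mg mp1 mp2 : marking -> marking) : Prop :=
  (forall c, XP c -> mf (mp1 c) = mg (mp2 c)) /\
  (forall (T : Type) (h1 h2 : T -> marking),
     (forall t, XA (h1 t)) -> (forall t, XB (h2 t)) ->
     (forall t, mf (h1 t) = mg (h2 t)) ->
     exists u : T -> marking,
       [/\ (forall t, XP (u t)),
           (forall t, mp1 (u t) = h1 t),
           (forall t, mp2 (u t) = h2 t) &
           (forall u' : T -> marking, (forall t, XP (u' t)) ->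
              (forall t, mp1 (u' t) = h1 t) ->
              (forall t, mp2 (u' t) = h2 t) ->
              forall t, u' t = u t)]).

End PMarkings.

(* A P-marking on the pullback P is determined by its image under M(p1), because p1
   is an order-embedding and cause sets are down-closed; this gives uniqueness.  For
   existence, pull every cause set K of the marking on A back along p1.  Let K' be the
   matching cause set on B, so that down(f K) = down(g K').  Every element of K lies
   below some a in K with f a = g b for some b in K': choose a maximal in K above it; then
   f a <= g b <= f a' with a' in K, so a <= a', hence a' <= a and f a = g b.  Probing
   the pullback with a one-point poset yields a point of P over (a, b), so
   down(p1 (p1^-1 K)) = K.  Symmetrically for K', since p1^-1 K = p2^-1 K'. *)

From HB Require Import structures.
From mathcomp Require Import all_boot finmap.
Set Implicit Arguments. Unset Strict Implicit. Unset Printing Implicit Defensive.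
Local Open Scope fset_scope.

Lemma imfset_in_inj_sub (T U : choiceType) (h : T -> U) (c c' : {fset T}) :
  {in c `|` c' &, injective h} -> h @` c `<=` h @` c' -> c `<=` c'.
Proof.
move=> h_inj /fsubsetP sub; apply/fsubsetP=> x xc.
have /imfsetP [/= y yc' hxy] := sub _ (in_imfset _ h xc).
by rewrite (h_inj x y) // inE ?xc ?yc' ?orbT.
Qed.

Lemma fset_maximal_above (T : choiceType) (r : rel T) (X : {fset T}) :
  {in X, forall x, r x x} ->
  (forall x y z, x \in X -> y \in X -> z \in X -> r x y -> r y z -> r x z) ->
  forall y, y \in X -> exists2 m, m \in X & r y m /\ {in X, forall z, r m z -> r z m}.
Proof.
move=> r_refl r_trans y.
have [n] := ubnP #|` [fset z in X | r y z]|; elim: n y => // n IH y up_lt yX.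
have [/hasP [z zX /andP [ryz /negP nrzy]]|no_above] :=
  boolP (has (fun z => r y z && ~~ r z y) X).
- have [|m mX [rzm m_max]] := IH z _ zX.
    apply: leq_trans (up_lt : _ <= n); apply: fproper_ltn_card; rewrite fproperE.
    apply/andP; split.
      apply/fsubsetP=> w; rewrite !inE => /andP [wX rzw].
      by rewrite wX (r_trans y z w).
    by apply/fsubsetP => /(_ y); rewrite !inE yX r_refl // => /(_ isT) /andP [_].
  by exists m => //; split=> //; apply: (r_trans y z m).
- exists y => //; split; first exact: r_refl.
  move=> z zX ryz; apply/negPn; apply: contra no_above => nrzy.
  by apply/hasP; exists z => //; rewrite ryz.
Qed.

Section LabelledEvents.
Variables E Act : choiceType.
Implicit Types (O : lposet E Act) (K : {fset (E * Act)}) (s : E -> E).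

Lemma in_levents O y : (y \in levents O) = (y.1 \in ev O) && (y.2 == lab O y.1).
Proof.
apply/imfsetP/andP => [[x xO ->]|[yO /eqP y2]] /=; first by rewrite xO eqxx.
by exists y.1 => //; rewrite -y2 -surjective_pairing.
Qed.

Lemma levents_fst O y : y \in levents O -> y.1 \in ev O.
Proof. by rewrite in_levents => /andP []. Qed.

Lemma levents_fst_inj O x y :
  x \in levents O -> y \in levents O -> x.1 = y.1 -> x = y.
Proof.
rewrite !in_levents => /andP [_ /eqP x2] /andP [_ /eqP y2] xy1.
by rewrite [x]surjective_pairing [y]surjective_pairing x2 y2 xy1.
Qed.

Lemma levents_morphism O O' s x :
  is_morphism O O' s -> x \in levents O -> (s x.1, x.2) \in levents O'.
Proof.
move=> [s_ev [s_lab _]]; rewrite !in_levents => /andP [x1 /eqP x2] /=.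
by rewrite s_ev // s_lab // x2 eqxx.
Qed.

Lemma in_lev_mapP s K y :
  reflect (exists2 x, x \in K & y = (s x.1, x.2)) (y \in lev_map s K).
Proof. exact: imfsetP. Qed.

Lemma mem_lev_map s K x : x \in K -> (s x.1, x.2) \in lev_map s K.
Proof. by move=> xK; apply/in_lev_mapP; exists x. Qed.

Lemma lev_map_comp s s' K : lev_map s (lev_map s' K) = lev_map (s \o s') K.
Proof.
apply/fsetP=> y; apply/in_lev_mapP/in_lev_mapP => [[_ /in_lev_mapP [x xK ->] ->]|].
  by exists x.
by move=> [x xK ->]; exists (s' x.1, x.2); rewrite ?mem_lev_map.
Qed.

Lemma eq_in_lev_map s s' K :
  {in K, forall x, s x.1 = s' x.1} -> lev_map s K = lev_map s' K.
Proof. by move=> ss'; apply: eq_in_imfset => x xK; rewrite /= ss'. Qed.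

Lemma lev_map_sub O O' s K :
  is_morphism O O' s -> K `<=` levents O -> lev_map s K `<=` levents O'.
Proof.
move=> s_mor /fsubsetP KO; apply/fsubsetP => _ /in_lev_mapP [x xK ->].
exact/(levents_morphism s_mor)/KO.
Qed.

Lemma in_down_setP O K y :
  reflect (y \in levents O /\ exists2 x, x \in K & (x \in levents O) && ple O y.1 x.1)
    (y \in down_set O K).
Proof.
rewrite inE; apply: (iffP andP) => [[yO /hasP [x xK hx]]|[yO [x xK hx]]];
  split=> //; [exists x | apply/hasP; exists x] => //.
Qed.

Lemma mem_down_set O K x :
  is_lposet O -> x \in K -> x \in levents O -> x \in down_set O K.
Proof.
move=> [O_refl _] xK xO; apply/in_down_setP; split=> //.
by exists x; rewrite // xO O_refl // levents_fst.
Qed.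

Lemma down_set_lev_map_down O O' s K :
  is_lposet O -> is_lposet O' -> is_morphism O O' s -> K `<=` levents O ->
  down_set O' (lev_map s (down_set O K)) = down_set O' (lev_map s K).
Proof.
move=> lO [_ [_ O'_trans]] s_mor KO; have [s_ev [_ s_le]] := s_mor.
apply/fsetP=> y; apply/in_down_setP/in_down_setP => -[yO'].
- move=> [_ /in_lev_mapP [z /in_down_setP [zO [k kK /andP [kO zk]]] ->] /andP [_ yz]].
  split=> //; exists (s k.1, k.2); first exact: mem_lev_map.
  rewrite (levents_morphism s_mor kO) /=.
  apply: (O'_trans _ (s z.1)); rewrite ?s_ev ?s_le ?(levents_fst yO') //;
    exact: levents_fst.
- move=> [_ /in_lev_mapP [k kK ->] /andP [kO' yk]]; split=> //.
  exists (s k.1, k.2); rewrite ?kO' //.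
  by apply/mem_lev_map/mem_down_set => //; apply: (fsubsetP KO).
Qed.

Definition lev_preim O s K : {fset (E * Act)} :=
  [fset y in levents O | (s y.1, y.2) \in K].

Lemma in_lev_preim O s K y :
  (y \in lev_preim O s K) = (y \in levents O) && ((s y.1, y.2) \in K).
Proof. by rewrite !inE. Qed.

Lemma down_closed_lev_preim O O' s K :
  is_morphism O O' s -> down_closed O' K -> down_closed O (lev_preim O s K).
Proof.
move=> s_mor [_ K_down]; split.
  by apply/fsubsetP => y; rewrite in_lev_preim => /andP [].
move=> y x; rewrite !in_lev_preim => /andP [yO yK] xO xy; rewrite xO.
apply: (K_down _ _ yK (levents_morphism s_mor xO)).
by have [_ [_ s_le]] := s_mor; apply: s_le; rewrite ?levents_fst.
Qed.

Lemma down_lev_map_preim_sub O O' s K :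
  down_closed O' K -> down_set O' (lev_map s (lev_preim O s K)) `<=` K.
Proof.
move=> [_ K_down]; apply/fsubsetP => y /in_down_setP [yO' [z /in_lev_mapP [x]]].
by rewrite in_lev_preim => /andP [_ xK] -> /andP [_ /= yx]; apply: K_down xK yO' yx.
Qed.

Lemma down_lev_map_sub O O' s K1 K2 :
  is_lposet O' -> is_embedding O O' s -> K1 `<=` levents O -> down_closed O K2 ->
  down_set O' (lev_map s K1) `<=` down_set O' (lev_map s K2) -> K1 `<=` K2.
Proof.
move=> lO' [s_mor s_refl] K1O [K2O K2_down] /fsubsetP sub; apply/fsubsetP => y yK1.
have yO := fsubsetP K1O _ yK1.
have := sub _ (mem_down_set lO' (mem_lev_map s yK1) (levents_morphism s_mor yO)).
move=> /in_down_setP [_ [_ /in_lev_mapP [x xK2 ->] /andP [_ /= yx]]].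
apply: (K2_down x y xK2 yO); apply: s_refl yx; apply: levents_fst => //.
exact: (fsubsetP K2O).
Qed.

Lemma down_lev_map_inj O O' s K1 K2 :
  is_lposet O' -> is_embedding O O' s -> down_closed O K1 -> down_closed O K2 ->
  down_set O' (lev_map s K1) = down_set O' (lev_map s K2) -> K1 = K2.
Proof.
move=> lO' s_emb dK1 dK2 eK; apply/eqP; rewrite eqEfsubset.
by rewrite (down_lev_map_sub lO' s_emb dK1.1 dK2) ?eK // (down_lev_map_sub lO' s_emb dK2.1 dK1) ?eK.
Qed.

Lemma eq_down_lev_map_match A B C f g K K' :
  is_lposet A -> is_lposet C -> is_embedding A C f -> is_morphism B C g ->
  K `<=` levents A -> K' `<=` levents B ->
  down_set C (lev_map f K) = down_set C (lev_map g K') ->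
  forall y, y \in K ->
  exists2 a, a \in K & ple A y.1 a.1 /\ exists2 b, b \in K' & f a.1 = g b.1.
Proof.
move=> [A_refl [_ A_trans]] lC [f_mor f_refl] g_mor KA K'B fKgK' y yK.
have [_ [C_anti C_trans]] := lC; have [f_ev [_ f_le]] := f_mor; have [g_ev _] := g_mor.
have evK x : x \in K -> x.1 \in ev A by move=> /(fsubsetP KA) /levents_fst.
have [a aK [ya a_max]] := @fset_maximal_above _ (fun x z => ple A x.1 z.1) K
  (fun x xK => A_refl _ (evK x xK))
  (fun x z w xK zK wK => A_trans _ _ _ (evK x xK) (evK z zK) (evK w wK)) y yK.
exists a => //; split=> //.
have := mem_down_set lC (mem_lev_map f aK) (levents_morphism f_mor (fsubsetP KA _ aK)).
rewrite fKgK' => /in_down_setP [_ [_ /in_lev_mapP [b bK' ->] /andP [_ /= fagb]]].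
have := mem_down_set lC (mem_lev_map g bK') (levents_morphism g_mor (fsubsetP K'B _ bK')).
rewrite -fKgK' => /in_down_setP [_ [_ /in_lev_mapP [a' a'K ->] /andP [_ /= gbfa']]].
have gbC : g b.1 \in ev C by apply/g_ev/levents_fst/(fsubsetP K'B).
have fa'a : ple C (f a'.1) (f a.1).
  apply/f_le/a_max => //; rewrite ?evK //.
  by apply: f_refl; rewrite ?evK //; apply: (C_trans _ (g b.1)); rewrite ?f_ev ?evK.
exists b => //; apply: C_anti; rewrite ?f_ev ?evK //.
by apply: (C_trans _ (f a'.1)); rewrite ?f_ev ?evK.
Qed.

Lemma lev_preim_sub P A B C p1 p2 f g K K' :
  is_lposet C -> is_morphism P A p1 -> is_morphism P B p2 ->
  is_morphism A C f -> is_embedding B C g ->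
  {in ev P, forall x, f (p1 x) = g (p2 x)} -> down_closed B K' ->
  down_set C (lev_map f K) `<=` down_set C (lev_map g K') ->
  lev_preim P p1 K `<=` lev_preim P p2 K'.
Proof.
move=> lC p1_mor p2_mor f_mor [g_mor g_refl] comm [K'B K'_down] /fsubsetP sub.
apply/fsubsetP => y; rewrite !in_lev_preim => /andP [yP yK]; rewrite yP /=.
have p1yA := levents_morphism p1_mor yP; have p2yB := levents_morphism p2_mor yP.
have := sub _ (mem_down_set lC (mem_lev_map f yK) (levents_morphism f_mor p1yA)).
move=> /in_down_setP [_ [_ /in_lev_mapP [b bK' ->] /andP [_ /=]]].
rewrite comm ?(levents_fst yP) // => p2yb.
apply: (K'_down b _ bK' p2yB); apply: g_refl p2yb.
  exact: (levents_fst p2yB).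
exact: levents_fst (fsubsetP K'B _ bK').
Qed.

End LabelledEvents.

Section Pullbacks.
Variables (E Act : choiceType) (Chosen : lposet E Act -> Prop).
Variables (A B C P : lposet E Act) (f g p1 p2 : E -> E).

Lemma is_pullback_O_sym :
  is_pullback_O Chosen A B C P f g p1 p2 -> is_pullback_O Chosen B A C P g f p2 p1.
Proof.
move=> [[cA [cB [cC cP]]] [f_emb [g_emb [p1_emb p2_emb]]] comm univ]; split=> //.
  by move=> x xP; rewrite comm.
move=> Q q2 q1 cQ q2_emb q1_emb comm'.
have [u [u_emb u1 u2 u_uniq]] := univ Q q1 q2 cQ q1_emb q2_emb
  (fun x xQ => esym (comm' x xQ)).
by exists u; split=> // u' u'_emb u'2 u'1; apply: u_uniq.
Qed.

Lemma const_embedding (O O' : lposet E Act) a :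
  is_lposet O' -> a \in ev O' -> {in ev O, forall x, lab O x = lab O' a} ->
  {in ev O &, forall x y, ple O x y} -> is_embedding O O' (fun _ => a).
Proof.
move=> [O'_refl _] aO' O_lab O_le; split; last by move=> x y xO yO _; apply: O_le.
by split=> //; split=> [x /O_lab ->|x y _ _ _]; last apply: O'_refl.
Qed.

Lemma pullback_point a b :
  skeleton Chosen -> is_pullback_O Chosen A B C P f g p1 p2 ->
  a \in ev A -> b \in ev B -> f a = g b ->
  exists2 p, p \in ev P & p1 p = a /\ p2 p = b.
Proof.
move=> [chosen_lposet chosen_iso _] [[cA [cB _]] [[f_mor _] [[g_mor _] _]] _ univ].
move=> aA bB fagb.
pose pt := @LPoset E Act [fset a] (fun _ _ => true) (fun _ => lab A a).
have lpt : is_lposet pt.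
  by split=> //; split=> // x y; rewrite !inE => /eqP -> /eqP ->.
have [Q [cQ [s [t [[[s_ev _] _] [[t_ev [t_lab _]] _] _ st]]]]] := chosen_iso pt lpt.
have saQ : s a \in ev Q by apply: s_ev; rewrite inE.
have Q_pt x : x \in ev Q -> x = s a.
  by move=> xQ; have := t_ev x xQ; rewrite inE => /eqP tx; rewrite -(st x xQ) tx.
have Q_le : {in ev Q &, forall x y, ple Q x y}.
  by have [Q_refl _] := chosen_lposet Q cQ; move=> x y /Q_pt -> /Q_pt ->; apply: Q_refl.
have Q_lab : {in ev Q, forall x, lab Q x = lab A a} by move=> x xQ; rewrite -t_lab.
have B_lab : lab B b = lab A a.
  by have [_ [f_lab _]] := f_mor; have [_ [g_lab _]] := g_mor; rewrite -g_lab -?fagb ?f_lab.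
have qA := const_embedding (chosen_lposet A cA) aA Q_lab Q_le.
have qB : is_embedding Q B (fun _ => b).
  by apply: const_embedding (chosen_lposet B cB) bB _ Q_le; rewrite B_lab.
have [u [[[u_ev _] _] u1 u2 _]] := univ Q _ _ cQ qA qB (fun _ _ => fagb).
by exists (u (s a)); [apply: u_ev | rewrite u1 ?u2].
Qed.

End Pullbacks.

Section Markings.
Variables E Act S : choiceType.
Implicit Types (O : lposet E Act) (s : E -> E) (c : marking E Act S).

Lemma MmapE O' s c :
  Mmap O' s c = [fset (down_set O' (lev_map s q.1), q.2) | q in c].
Proof. by rewrite /Mmap /down_mark /mark_map -imfset_comp. Qed.

Definition preim_mark O s c : marking E Act S :=
  [fset (lev_preim O s q.1, q.2) | q in c].

Lemma Mobj_preim_mark O O' s c :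
  is_morphism O O' s -> Mobj O' c -> Mobj O (preim_mark O s c).
Proof.
move=> s_mor c_O' _ /imfsetP [q qc ->].
exact: down_closed_lev_preim s_mor (c_O' q qc).
Qed.

Lemma Mmap_comp O O' O'' s s' c :
  is_lposet O' -> is_lposet O'' -> is_morphism O O' s -> is_morphism O' O'' s' ->
  Mobj O c -> Mmap O'' s' (Mmap O' s c) = Mmap O'' (s' \o s) c.
Proof.
move=> lO' lO'' s_mor s'_mor c_O; rewrite !MmapE -imfset_comp.
apply: eq_in_imfset => q qc /=; have [qO _] := c_O q qc.
by rewrite down_set_lev_map_down ?lev_map_comp // (lev_map_sub s_mor).
Qed.

Lemma eq_in_Mmap O O' s s' c :
  {in ev O, s =1 s'} -> Mobj O c -> Mmap O' s c = Mmap O' s' c.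
Proof.
move=> ss' c_O; rewrite !MmapE; apply: eq_in_imfset => q qc /=.
have [qO _] := c_O q qc.
by rewrite (@eq_in_lev_map _ _ s s') // => x /(fsubsetP qO) /levents_fst /ss'.
Qed.

Lemma Mmap_inj O O' s c c' :
  is_lposet O' -> is_embedding O O' s -> Mobj O c -> Mobj O c' ->
  Mmap O' s c = Mmap O' s c' -> c = c'.
Proof.
move=> lO' s_emb c_O c'_O; rewrite !MmapE => e; apply/eqP; rewrite eqEfsubset.
pose h (q : {fset (E * Act)} * S) := (down_set O' (lev_map s q.1), q.2).
have inj : {in c `|` c' &, injective h}.
  have dc q : q \in c `|` c' -> down_closed O q.1.
    by case/fsetUP => [/c_O | /c'_O].
  move=> q q' qc q'c [eK e2].
  rewrite [q]surjective_pairing [q']surjective_pairing e2.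
  by rewrite (down_lev_map_inj lO' s_emb (dc q qc) (dc q' q'c) eK).
apply/andP; split; apply: (imfset_in_inj_sub (h := h)); rewrite ?e //.
by rewrite fsetUC.
Qed.

Lemma Mmap_partner C f g (cA cB : marking E Act S) q :
  Mmap C f cA = Mmap C g cB -> q \in cA ->
  exists2 q', q' \in cB &
    down_set C (lev_map f q.1) = down_set C (lev_map g q'.1) /\ q.2 = q'.2.
Proof.
rewrite !MmapE => e qc.
have : (down_set C (lev_map f q.1), q.2) \in
    [fset (down_set C (lev_map f q.1), q.2) | q in cA] by apply/imfsetP; exists q.
by rewrite e => /imfsetP [q' q'c [eK e2]]; exists q'.
Qed.

End Markings.

Section PullbackMarkings.
Variables (E Act S : choiceType) (Chosen : lposet E Act -> Prop).
Variables (A B C P : lposet E Act) (f g p1 p2 : E -> E).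
Hypothesis HChosen : skeleton Chosen.
Hypothesis pb : is_pullback_O Chosen A B C P f g p1 p2.

Let lposetA : is_lposet A.
Proof. by case: HChosen pb => lp _ _ [[cA _] _ _ _]; apply: lp. Qed.
Let lposetB : is_lposet B.
Proof. by case: HChosen pb => lp _ _ [[_ [cB _]] _ _ _]; apply: lp. Qed.
Let lposetC : is_lposet C.
Proof. by case: HChosen pb => lp _ _ [[_ [_ [cC _]]] _ _ _]; apply: lp. Qed.
Let f_emb : is_embedding A C f. Proof. by case: pb => _ []. Qed.
Let g_emb : is_embedding B C g. Proof. by case: pb => _ [_ []]. Qed.
Let p1_emb : is_embedding P A p1. Proof. by case: pb => _ [_ [_ []]]. Qed.
Let p2_emb : is_embedding P B p2. Proof. by case: pb => _ [_ [_ [_]]]. Qed.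
Let comm : {in ev P, forall x, f (p1 x) = g (p2 x)}. Proof. by case: pb. Qed.

Lemma Mmap_pullback_comm (c : marking E Act S) :
  Mobj P c -> Mmap C f (Mmap A p1 c) = Mmap C g (Mmap B p2 c).
Proof.
move=> c_P; rewrite (Mmap_comp lposetA lposetC p1_emb.1 f_emb.1 c_P).
rewrite (Mmap_comp lposetB lposetC p2_emb.1 g_emb.1 c_P).
exact: eq_in_Mmap comm c_P.
Qed.

Lemma lev_preim_pullback K K' :
  down_closed A K -> down_closed B K' ->
  down_set C (lev_map f K) = down_set C (lev_map g K') ->
  lev_preim P p1 K = lev_preim P p2 K'.
Proof.
move=> dK dK' eK; apply/eqP; rewrite eqEfsubset.
rewrite (lev_preim_sub lposetC p1_emb.1 p2_emb.1 f_emb.1 g_emb comm dK') ?eK //=.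
apply: (lev_preim_sub lposetC p2_emb.1 p1_emb.1 g_emb.1 f_emb _ dK); last by rewrite eK.
by move=> x /comm.
Qed.

Lemma down_lev_map_preim K K' :
  down_closed A K -> down_closed B K' ->
  down_set C (lev_map f K) = down_set C (lev_map g K') ->
  down_set A (lev_map p1 (lev_preim P p1 K)) = K.
Proof.
move=> dK [K'B _] eK; apply/eqP; rewrite eqEfsubset down_lev_map_preim_sub //=.
apply/fsubsetP => y yK; have [KA _] := dK.
have [a aK [ya [b bK' fagb]]] :=
  eq_down_lev_map_match lposetA lposetC f_emb g_emb.1 KA K'B eK yK.
have aA := fsubsetP KA _ aK.
have [p pP [p1a _]] := pullback_point HChosen pb (levents_fst aA)
  (levents_fst (fsubsetP K'B _ bK')) fagb.
have pP' : (p, lab P p) \in levents P by rewrite in_levents pP eqxx.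
have p1pa : (p1 p, lab P p) = a.
  by apply: levents_fst_inj (levents_morphism p1_emb.1 pP') aA _.
apply/in_down_setP; split; first exact: (fsubsetP KA).
exists a; last by rewrite aA.
by rewrite -p1pa (mem_lev_map p1 (x := (p, lab P p))) // in_lev_preim pP' /= p1pa.
Qed.

Lemma preim_mark_pullback (cA cB : marking E Act S) :
  Mobj A cA -> Mobj B cB -> Mmap C f cA = Mmap C g cB ->
  preim_mark P p1 cA = preim_mark P p2 cB.
Proof.
move=> cA_A cB_B e; apply/eqP; rewrite eqEfsubset.
apply/andP; split; apply/fsubsetP => _ /imfsetP [q qc ->]; apply/imfsetP.
- have [q' q'c [eK ->]] := Mmap_partner e qc.
  by exists q' => //=; rewrite (lev_preim_pullback (cA_A q qc) (cB_B q' q'c) eK).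
- have [q' q'c [eK ->]] := Mmap_partner (esym e) qc.
  by exists q' => //=; rewrite (lev_preim_pullback (cA_A q' q'c) (cB_B q qc) (esym eK)).
Qed.

Lemma Mmap_preim_mark (cA cB : marking E Act S) :
  Mobj A cA -> Mobj B cB -> Mmap C f cA = Mmap C g cB ->
  Mmap A p1 (preim_mark P p1 cA) = cA.
Proof.
move=> cA_A cB_B e; rewrite MmapE /preim_mark -imfset_comp -[RHS]imfset_id.
apply: eq_in_imfset => q qc /=; have [q' q'c [eK _]] := Mmap_partner e qc.
by rewrite (down_lev_map_preim (cA_A q qc) (cB_B q' q'c) eK) -surjective_pairing.
Qed.

End PullbackMarkings.

Theorem lemma4 (E Act S : choiceType)
  (E_infinite : forall X : {fset E}, exists e : E, e \notin X)
  (Chosen : lposet E Act -> Prop) (HChosen : skeleton Chosen)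
  (A B C P : lposet E Act) (f g p1 p2 : E -> E) :
  is_pullback_O Chosen A B C P f g p1 p2 ->
  set_pullback (@Mobj E Act S A) (@Mobj E Act S B) (@Mobj E Act S P)
    (@Mmap E Act S C f) (@Mmap E Act S C g)
    (@Mmap E Act S A p1) (@Mmap E Act S B p2).
Proof.
move=> pb; have pb_sym := is_pullback_O_sym pb.
have [[chA _] [_ [_ [p1_emb _]]] _ _] := pb; have [chosen_lposet _ _] := HChosen.
split=> [c|T cA cB cA_A cB_B e]; first exact: (Mmap_pullback_comm HChosen pb).
exists (fun t => preim_mark P p1 (cA t)); split=> [t|t|t|u u_P u_A _ t] /=.
- exact: (Mobj_preim_mark p1_emb.1 (cA_A t)).
- exact: (Mmap_preim_mark HChosen pb (cA_A t) (cB_B t) (e t)).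
- rewrite (preim_mark_pullback HChosen pb (cA_A t) (cB_B t) (e t)).
  exact: (Mmap_preim_mark HChosen pb_sym (cB_B t) (cA_A t) (esym (e t))).
- apply: (Mmap_inj (chosen_lposet A chA) p1_emb (u_P t)).
    exact: (Mobj_preim_mark p1_emb.1 (cA_A t)).
  by rewrite u_A (Mmap_preim_mark HChosen pb (cA_A t) (cB_B t) (e t)).
Qed.
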